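(* In the setting described in the context, let $J=\mathbb{E}_{p_\phi(\tau)}\big[(1-\gamma)\sum_{t=0}^\infty\gamma^t r(s_t,a_t)\big]$ and, for $H\in\{0,\dots,K\}$, let $Z_H=\int p_\phi(\tau\mid H)\,\Psi(\tau,H)\,d\tau$ (assumed finite and positive, where $\tau$ ranges over length-$(H+1)$ trajectories). For any probability distribution $g$ on $\{0,\dots,K\}$ and any family of densities $q(\tau\mid H)$ on length-$(H+1)$ trajectories, define $$B(g,q)=\sum_{H=0}^K g(H)\int q(\tau\mid H)\log\frac{P_K(H)\,p_\phi(\tau\mid H)\,\Psi(\tau,H)}{g(H)\,q(\tau\mid H)}\,d\tau.$$ Then $\log J\ge B(g,q)$ for all such $g,q$, and equality $B(g^*,q^* )=\log J$ holds for $$q^*(\tau\mid H)=\frac{p_\phi(\tau\mid H)\Psi(\tau,H)}{Z_H},\qquad g^*(H)=\frac{P_K(H)Z_H}{\sum_{H'=0}^K P_K(H')Z_{H'}}.$$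
   Context: An MDP has states $s$, actions $a$, initial state distribution $p_0(s)$, transition density $p(s_{t+1}\mid s_t,a_t)$, nonnegative reward $r(s,a)\ge0$, discount $\gamma\in(0,1)$. An encoder $e_\phi(z\mid s)$ and latent policy $\pi_\phi(a\mid z)$ are conditional distributions; trajectories are $\tau=(s_0,a_0,z_0,s_1,a_1,z_1,\dots)$ with true distribution $p_\phi(\tau)=p_0(s_0)\prod_{t\ge0}p(s_{t+1}\mid s_t,a_t)\pi_\phi(a_t\mid z_t)e_\phi(z_t\mid s_t)$, and $Q(s,a)=\mathbb{E}_{p_\phi}[(1-\gamma)\sum_{t\ge0}\gamma^t r(s_t,a_t)\mid s_0=s,a_0=a]$. Fix $K\in\mathbb{N}$. The truncated geometric distribution is $P_K(H)=(1-\gamma)\gamma^H$ for $H\in\{0,\dots,K-1\}$, $P_K(K)=\gamma^K$, and $0$ for $H>K$. For $H\in\{0,\dots,K\}$, $p_\phi(\tau\mid H)=p_0(s_0)e_\phi(z_0\mid s_0)\pi_\phi(a_0\mid z_0)\prod_{t=1}^H p(s_t\mid s_{t-1},a_{t-1})\pi_\phi(a_t\mid z_t)e_\phi(z_t\mid s_t)$ is the distribution of the first $H+1$ steps of a trajectory, and $\Psi(\tau,H)=\mathbb{1}\{H\le K-1\}\,r(s_H,a_H)+\mathbb{1}\{H=K\}\,Q(s_H,a_H)$. *)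

From HB Require Import structures.
From mathcomp Require Import all_boot all_order all_algebra.
From mathcomp Require Import all_classical all_reals all_analysis.
Set Implicit Arguments. Unset Strict Implicit. Unset Printing Implicit Defensive.
Import Order.TTheory GRing.Theory Num.Theory.
Local Open Scope classical_set_scope.
Local Open Scope ring_scope.

Section MDP.
Context {R : realType} {dS dA dZ : measure_display}
  (S : measurableType dS) (A : measurableType dA) (Z : measurableType dZ)
  (muS : {measure set S -> \bar R}) (muA : {measure set A -> \bar R})
  (muZ : {measure set Z -> \bar R}).

Definition stepD : measure_display := ((dS, dA).-prod, dZ).-prod%mdisp.
Definition stepT : measurableType stepD := (S * A * Z)%type.
Definition st (x : stepT) : S := x.1.1.
Definition ac (x : stepT) : A := x.1.2.
Definition zt (x : stepT) : Z := x.2.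

(* trajectories with n+1 steps (s_0,a_0,z_0,...,s_n,a_n,z_n), as nested pairs *)
Fixpoint trajD (n : nat) : measure_display :=
  match n with 0 => stepD | n'.+1 => (trajD n', stepD).-prod%mdisp end.
Fixpoint trajT (n : nat) : measurableType (trajD n) :=
  match n return measurableType (trajD n) with
  | 0 => stepT
  | n'.+1 => (trajT n' * stepT)%type
  end.

(* the reference measure on one step is muS (x) muA (x) muZ; integrals over
   it are written as iterated integrals *)
Definition stepInt (f : stepT -> \bar R) : \bar R :=
  (\int[muS]_s \int[muA]_a \int[muZ]_z f ((s, a), z))%E.

(* integral "d tau" over trajectories with n+1 steps w.r.t. the product
   reference measure, as an iterated integral (Tonelli) *)
Fixpoint tint (n : nat) : (trajT n -> \bar R) -> \bar R :=
  match n return (trajT n -> \bar R) -> \bar R with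
  | 0 => fun f => stepInt f
  | n'.+1 => fun f => tint (fun tau => stepInt (fun x => f (tau, x)))
  end.

Definition sint (n : nat) (f : trajT n -> \bar R) : \bar R :=
  (tint (fun tau => maxe (f tau) 0) - tint (fun tau => maxe (- f tau) 0))%E.

Fixpoint lastx (n : nat) : trajT n -> stepT :=
  match n return trajT n -> stepT with
  | 0 => fun x => x
  | n'.+1 => fun tau => tau.2
  end.

Fixpoint dens (init : stepT -> R) (trans : stepT -> stepT -> R) (n : nat)
  : trajT n -> R :=
  match n return trajT n -> R with
  | 0 => fun x => init x
  | n'.+1 => fun tau => dens init trans tau.1 * trans (lastx tau.1) tau.2
  end.

End MDP.

Section Model.
Context {R : realType} {dS dA dZ : measure_display}
  (S : measurableType dS) (A : measurableType dA) (Z : measurableType dZ)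
  (muS : {measure set S -> \bar R}) (muA : {measure set A -> \bar R})
  (muZ : {measure set Z -> \bar R})
  (p0 : S -> R)
  (p : S -> A -> S -> R)   (* p s a s'   = p(s' | s, a)       *)
  (e : S -> Z -> R)        (* e s z      = e_phi(z | s)       *)
  (pi : Z -> A -> R)       (* pi z a     = pi_phi(a | z)      *)
  (r : S -> A -> R) (gamma : R) (K : nat).

Local Notation stepT := (stepT S A Z).
Local Notation trajT := (trajT S A Z).
Local Notation tint := (tint muS muA muZ).
Local Notation sint := (sint muS muA muZ).

Definition polDens (x : stepT) : R := e (st x) (zt x) * pi (zt x) (ac x).
Definition transDens (x y : stepT) : R := p (st x) (ac x) (st y) * polDens y.
Definition initDens (x : stepT) : R := p0 (st x) * polDens x.

Definition pphi (H : nat) : trajT H -> R := dens initDens transDens (n := H).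

Definition rlast (n : nat) (tau : trajT n) : R :=
  r (st (lastx tau)) (ac (lastx tau)).

(* E[ r(s_t,a_t) | s_0 = s, a_0 = a ] *)
Definition condRew (s : S) (a : A) (t : nat) : \bar R :=
  match t with
  | 0 => (r s a)%:E
  | t'.+1 => tint (fun tau : trajT t' =>
       (dens (fun y => p s a (st y) * polDens y) transDens tau * rlast tau)%:E)
  end.

Definition Qfun (s : S) (a : A) : \bar R :=
  (\sum_(0 <= t <oo) ((1 - gamma) * gamma ^+ t)%:E * condRew s a t)%E.

Definition Jobj : \bar R :=
  (\sum_(0 <= t <oo) ((1 - gamma) * gamma ^+ t)%:E *
     tint (fun tau : trajT t => (pphi tau * rlast tau)%:E))%E.

Definition PK (H : nat) : R :=
  if (H < K)%N then (1 - gamma) * gamma ^+ H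
  else if H == K then gamma ^+ K else 0.

Definition Psi (H : nat) (tau : trajT H) : \bar R :=
  if (H < K)%N then (rlast tau)%:E
  else if H == K then Qfun (st (lastx tau)) (ac (lastx tau)) else 0%E.

Definition ZH (H : nat) : \bar R :=
  tint (fun tau : trajT H => ((pphi tau)%:E * Psi tau)%E).

(* extended log: log 0 = -oo, log(+oo) = +oo *)
Definition elog (x : \bar R) : \bar R :=
  match x with
  | EFin y => if 0 < y then (ln y)%:E else -oo%E
  | +oo%E => +oo%E
  | -oo%E => -oo%E
  end.

(* q * log(c / q), with the convention 0 * log(...) = 0 *)
Definition qlog (q : R) (c : \bar R) : \bar R :=
  if q == 0 then 0%E else (q%:E * elog (c * (q^-1)%:E))%E.

(* B(g, q); a term with g(H) = 0 contributes 0 *)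
Definition Bbound (g : nat -> R) (q : forall H, trajT H -> R) : \bar R :=
  (\sum_(0 <= H < K.+1)
     (if g H == 0%R then 0
      else (g H)%:E * sint (fun tau : trajT H =>
              qlog (q H tau) ((PK H * pphi tau / g H)%:E * Psi tau))))%E.

Definition is_prob (g : nat -> R) : Prop :=
  (forall H, (H <= K)%N -> 0 <= g H) /\ \sum_(0 <= H < K.+1) g H = 1.

Definition is_traj_density (q : forall H, trajT H -> R) : Prop :=
  forall H, (H <= K)%N ->
    [/\ forall tau, 0 <= q H tau, measurable_fun setT (q H)
      & tint (fun tau => (q H tau)%:E) = 1%E].

Definition qstar (H : nat) (tau : trajT H) : R :=
  fine ((pphi tau)%:E * Psi tau)%E / fine (ZH H).

Definition gstar (H : nat) : R :=
  PK H * fine (ZH H) / \sum_(0 <= H' < K.+1) PK H' * fine (ZH H').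

End Model.

(* Put Jsum := sum_{H <= K} P_K(H) Z_H.  Cutting the discounted series
   defining J after K terms gives J = Jsum: the terms t < K are the
   P_K(H) Z_H with H < K, and since the path density factors at step K
   (Markov property) the tail sum_{t >= K} (1-gamma) gamma^t E[r(s_t,a_t)]
   is gamma^K E[Q(s_K,a_K)] = P_K(K) Z_K.
   The bound is Gibbs' inequality: with c = P_K(H) p_phi(tau|H) Psi(tau,H) / g(H),
   ln x <= x - 1 gives q log(c/q) <= q (ln Jsum - 1) + c / Jsum, and after
   integrating and summing against g the right-hand side is exactly ln Jsum.
   For q* and g* the ratio c/q is the constant Jsum, so every term is ln Jsum. *)

From Pilot Require Import Defs.
From HB Require Import structures.
From mathcomp Require Import all_boot all_order all_algebra.
From mathcomp Require Import all_classical all_reals all_analysis.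
From mathcomp Require Import measurable_realfun.
From mathcomp Require Import ring lra.
Import Order.TTheory GRing.Theory Num.Theory.
Local Open Scope classical_set_scope.
Local Open Scope ring_scope.
Set Implicit Arguments. Unset Strict Implicit. Unset Printing Implicit Defensive.

Section product_sfmeasure.
Context d1 d2 (T1 : measurableType d1) (T2 : measurableType d2) (R : realType).
Variables (m1 : {sigma_finite_measure set T1 -> \bar R})
  (m2 : {sigma_finite_measure set T2 -> \bar R}).

(* The library proves this too, but its instance is shadowed by the canonical
   one for products of subprobabilities, so it cannot be inferred. *)
Lemma product_measure1_sigma_finite : sigma_finite setT (m1 \x m2)%E.
Proof.
have /sigma_finiteP[F [UF ndF Ffin]] := sigma_finiteT m1.
have /sigma_finiteP[G [UG ndG Gfin]] := sigma_finiteT m2.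
exists (fun n => F n `*` G n); last first.
  move=> n; have [mF Foo] := Ffin n; have [mG Goo] := Gfin n.
  split; first exact: measurableX.
  by rewrite product_measure1E // lte_mul_pinfty // ge0_fin_numE.
apply/seteqP; split => [[x y] _|//].
have [i _ Fix] : (\bigcup_n F n) x by rewrite -UF.
have [j _ Gjy] : (\bigcup_n G n) y by rewrite -UG.
exists (maxn i j) => //; split => /=.
- by move: x Fix; exact/subsetPset/ndF/leq_maxl.
- by move: y Gjy; exact/subsetPset/ndG/leq_maxr.
Qed.

Definition product_sfmeasure : {sigma_finite_measure set (T1 * T2)%type -> \bar R} :=
  HB.pack_for (SigmaFiniteMeasure.type _ R) (m1 \x m2)%E
    (Measure_isSigmaFinite.Build _ _ _ (m1 \x m2)%E product_measure1_sigma_finite).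

Lemma integral_product_sfmeasure (f : (T1 * T2)%type -> \bar R) :
  measurable_fun setT f -> (forall z, 0 <= f z)%E ->
  (\int[product_sfmeasure]_z f z = \int[m1]_x \int[m2]_y f (x, y))%E.
Proof. exact: fubini_tonelli1. Qed.

End product_sfmeasure.

Section ge0_integral.
Context d (T : measurableType d) (R : realType) (mu : {measure set T -> \bar R}).
Implicit Types f g : T -> \bar R.

(* The integral of a nonnegative function is a supremum over the simple
   functions below it, so monotonicity needs no measurability. *)
Lemma ge0_le_integral_nomeas f g : (forall x, 0 <= f x)%E ->
  (forall x, f x <= g x)%E -> (\int[mu]_x f x <= \int[mu]_x g x)%E.
Proof.
move=> f0 fg; have g0 x : (0 <= g x)%E := le_trans (f0 x) (fg x).
rewrite (ge0_integralE _ (fun x _ => f0 x)) (ge0_integralE _ (fun x _ => g0 x)).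
apply: ereal_sup_le => _ [h hf <-]; exists h => //= x.
by apply: le_trans (hf x) _; rewrite /patch; case: ifP => // _; exact: fg.
Qed.

Lemma ge0_integrableT f : measurable_fun setT f -> (forall x, 0 <= f x)%E ->
  (\int[mu]_x f x < +oo)%E -> mu.-integrable setT f.
Proof.
move=> mf f0 foo; apply/integrableP; split => //.
by under eq_integral => x _ do rewrite gee0_abs //.
Qed.

Lemma ge0_integral_fine f : measurable_fun setT f -> (forall x, 0 <= f x)%E ->
  (\int[mu]_x f x < +oo)%E -> (\int[mu]_x (fine (f x))%:E = \int[mu]_x f x)%E.
Proof.
move=> mf f0 foo; have fint := ge0_integrableT mf f0 foo.
apply: ae_eq_integral => //.
- exact/measurable_EFinP/(measurableT_comp (fine_measurable measurableT) mf).
- by apply: filterS (integrable_ae measurableT fint) => x /[apply]; exact: fineK.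
Qed.

End ge0_integral.

Section trajectory_integral.
Context {R : realType} {dS dA dZ : measure_display}
  (S : measurableType dS) (A : measurableType dA) (Z : measurableType dZ)
  (muS : {sigma_finite_measure set S -> \bar R})
  (muA : {sigma_finite_measure set A -> \bar R})
  (muZ : {sigma_finite_measure set Z -> \bar R}).
Local Notation stepT := (stepT S A Z).
Local Notation trajT := (trajT S A Z).
Local Notation stepInt := (stepInt muS muA muZ).
Local Notation tint := (tint muS muA muZ).
Local Notation sint := (sint muS muA muZ).

Definition step_measure : {sigma_finite_measure set stepT -> \bar R} :=
  product_sfmeasure (product_sfmeasure muS muA) muZ.

Fixpoint traj_measure n : {sigma_finite_measure set trajT n -> \bar R} :=
  match n with
  | 0 => step_measure
  | n.+1 => product_sfmeasure (traj_measure n) step_measure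
  end.

Lemma stepInt_integral (f : stepT -> \bar R) :
  measurable_fun setT f -> (forall x, 0 <= f x)%E ->
  stepInt f = (\int[step_measure]_x f x)%E.
Proof.
move=> mf f0; rewrite /step_measure !integral_product_sfmeasure //.
- exact: measurable_fun_fubini_tonelli_F.
- by move=> sa; apply: integral_ge0.
Qed.

Lemma tint_integral n (f : trajT n -> \bar R) :
  measurable_fun setT f -> (forall tau, 0 <= f tau)%E ->
  tint f = (\int[traj_measure n]_tau f tau)%E.
Proof.
elim: n f => [|n IH] f mf f0; first exact: stepInt_integral.
have mf_tau tau : measurable_fun setT (fun x => f (tau, x)).
  exact: measurable_fun_pair2.
transitivity (tint (fun tau : trajT n => \int[step_measure]_x f (tau, x)))%E.
  transitivity (tint (fun tau : trajT n => stepInt (fun x => f (tau, x)))) => //.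
  by congr Defs.tint; apply: funext => tau; exact: stepInt_integral.
rewrite IH; first exact/esym/integral_product_sfmeasure.
- exact: measurable_fun_fubini_tonelli_F.
- by move=> tau; apply: integral_ge0.
Qed.

Lemma stepInt_ge0 (f : stepT -> \bar R) :
  (forall x, 0 <= f x)%E -> (0 <= stepInt f)%E.
Proof. by move=> f0; do 3 (apply: integral_ge0 => ? _). Qed.

Lemma le_stepInt (f g : stepT -> \bar R) : (forall x, 0 <= f x)%E ->
  (forall x, f x <= g x)%E -> (stepInt f <= stepInt g)%E.
Proof.
move=> f0 fg; apply: ge0_le_integral_nomeas => [s|s].
  by do 2 (apply: integral_ge0 => ? _).
apply: ge0_le_integral_nomeas => [a|a]; first by apply: integral_ge0.
exact: ge0_le_integral_nomeas.
Qed.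

Lemma tint_ge0 n (f : trajT n -> \bar R) :
  (forall tau, 0 <= f tau)%E -> (0 <= tint f)%E.
Proof.
elim: n f => [|n IH] f f0; first exact: stepInt_ge0.
by apply: IH => tau; apply: stepInt_ge0.
Qed.

Lemma le_tint n (f g : trajT n -> \bar R) : (forall tau, 0 <= f tau)%E ->
  (forall tau, f tau <= g tau)%E -> (tint f <= tint g)%E.
Proof.
elim: n f g => [|n IH] f g f0 fg; first exact: le_stepInt.
apply: IH => tau; first exact: stepInt_ge0.
exact: le_stepInt.
Qed.

Lemma le_sint n (f g : trajT n -> \bar R) :
  (forall tau, f tau <= g tau)%E -> (sint f <= sint g)%E.
Proof.
move=> fg; apply: leeB; apply: le_tint => tau.
- by rewrite le_max lexx orbT.
- by rewrite ge_max !le_max fg lexx !orbT.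
- by rewrite le_max lexx orbT.
- by rewrite ge_max !le_max leeN2 fg lexx !orbT.
Qed.

Lemma sint_integral n (f : trajT n -> \bar R) : measurable_fun setT f ->
  sint f = (\int[traj_measure n]_tau f tau)%E.
Proof.
move=> mf; rewrite integralE -!tint_integral.
- by congr (_ - _)%E; congr Defs.tint; apply: funext => tau;
    rewrite ?funeposE ?funenegE.
- exact: measurable_funeneg.
- by move=> tau; rewrite funenegE le_max lexx orbT.
- exact: measurable_funepos.
- by move=> tau; rewrite funeposE le_max lexx orbT.
Qed.

Fixpoint tcat n m : trajT n -> trajT m -> trajT (m + n.+1) :=
  match m return trajT n -> trajT m -> trajT (m + n.+1) with
  | 0 => fun tau x => (tau, x)
  | m.+1 => fun tau sig => (tcat tau sig.1, sig.2)
  end.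

Lemma tint_tcat n m (f : trajT (m + n.+1) -> \bar R) :
  tint f = tint (fun tau : trajT n => tint (fun sig : trajT m => f (tcat tau sig))).
Proof.
elim: m f => [//|m IH] f.
exact: (IH (fun rho => stepInt (fun x => f (rho, x)))).
Qed.

Lemma lastx_tcat n m (tau : trajT n) (sig : trajT m) :
  lastx (tcat tau sig) = lastx sig.
Proof. by case: m sig. Qed.

Lemma dens_ge0 (init : stepT -> R) (trans : stepT -> stepT -> R) :
  (forall x, 0 <= init x) -> (forall x y, 0 <= trans x y) ->
  forall n (tau : trajT n), 0 <= dens init trans tau.
Proof. by move=> init0 trans0; elim => [|n IH] tau //=; rewrite mulr_ge0. Qed.

Lemma dens_tcat (init : stepT -> R) (trans : stepT -> stepT -> R) n m
    (tau : trajT n) (sig : trajT m) :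
  dens init trans (tcat tau sig) =
  dens init trans tau * dens (trans (lastx tau)) trans sig.
Proof.
elim: m sig => [//|m IH] [sig x] /=.
by rewrite IH lastx_tcat mulrA.
Qed.

End trajectory_integral.

Section log_bounds.
Context {R : realType}.

Lemma ln_le_subr1 (x : R) : 0 < x -> ln x <= x - 1.
Proof.
move=> x0; rewrite -(expRK (x - 1)) ler_ln ?posrE ?expR_gt0 //.
by have := expR_ge1Dx (x - 1); rewrite addrC subrK.
Qed.

Lemma elog_le_tangent (L : R) (y : \bar R) : 0 < L -> (0 <= y)%E ->
  (elog y <= (ln L - 1)%:E + (L^-1)%:E * y)%E.
Proof.
move=> L0; case: y => [y||] //= y0; last first.
  by rewrite gt0_muley ?lte_fin ?invr_gt0 // addey.
case: ifPn => y_gt0; last exact: leNye.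
rewrite -EFinM -EFinD lee_fin.
have Ly_gt0 : 0 < L^-1 * y by rewrite mulr_gt0 ?invr_gt0.
have -> : y = L * (L^-1 * y) by rewrite mulrA mulfV ?gt_eqF // mul1r.
rewrite lnM ?posrE // mulrA mulVf ?gt_eqF // mul1r.
by have := ln_le_subr1 Ly_gt0; lra.
Qed.

Lemma qlog_le_tangent (L w : R) (c : \bar R) : 0 < L -> 0 <= w -> (0 <= c)%E ->
  (qlog w c <= (w * (ln L - 1))%:E + (L^-1)%:E * c)%E.
Proof.
move=> L0 w0 c0; rewrite /qlog; have [->|w_neq0] := eqVneq w 0.
  by rewrite mul0r add0e mule_ge0 // lee_fin invr_ge0 ltW.
have w_gt0 : 0 < w by rewrite lt_def w_neq0.
have cw_ge0 : (0 <= c * (w^-1)%:E)%E by rewrite mule_ge0 // lee_fin invr_ge0.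
apply: (@le_trans _ _ (w%:E * ((ln L - 1)%:E + (L^-1)%:E * (c * (w^-1)%:E)))%E).
  by apply: lee_wpmul2l; [rewrite lee_fin | exact: elog_le_tangent].
by rewrite muleDr // -EFinM muleCA [(w%:E * _)%E]muleCA -EFinM mulfV ?mule1.
Qed.

Lemma qlog_scaled (k z : R) (u : \bar R) : 0 < z -> 0 < k -> (0 <= u)%E ->
  qlog (fine u / z) (k%:E * u) = ((ln (k * z))%:E * (fine u / z)%:E)%E.
Proof.
move=> z0 k0; rewrite /qlog; case: eqVneq => [->|q_neq0]; first by rewrite mule0.
case: u q_neq0 => [x||] //=; last by rewrite mul0r eqxx.
move=> q_neq0; rewrite lee_fin => x0; have x_gt0 : 0 < x.
  by rewrite lt_def x0 andbT; apply: contra_neq q_neq0 => ->; rewrite mul0r.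
have -> : k * x * (x / z)^-1 = k * z by field; rewrite !gt_eqF.
by rewrite mulr_gt0 // muleC.
Qed.

End log_bounds.

Section trajectory_measurability.
Context {R : realType} {dS dA dZ : measure_display}
  {S : measurableType dS} {A : measurableType dA} {Z : measurableType dZ}.
Local Notation stepT := (stepT S A Z).
Local Notation trajT := (trajT S A Z).

Lemma measurable_st : measurable_fun setT (@st _ _ _ S A Z).
Proof. exact: measurableT_comp measurable_fst measurable_fst. Qed.

Lemma measurable_ac : measurable_fun setT (@ac _ _ _ S A Z).
Proof. exact: measurableT_comp measurable_snd measurable_fst. Qed.

Lemma measurable_zt : measurable_fun setT (@zt _ _ _ S A Z).
Proof. exact: measurable_snd. Qed.

Lemma measurable_lastx n : measurable_fun setT (@lastx _ _ _ S A Z n).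
Proof. by case: n => [|n]; [exact: measurable_id | exact: measurable_snd]. Qed.

Variables (init : stepT -> R) (trans : stepT -> stepT -> R).
Hypothesis mtrans : measurable_fun setT (fun xy : stepT * stepT => trans xy.1 xy.2).

Lemma measurable_dens n : measurable_fun setT init ->
  measurable_fun setT (@dens _ _ _ _ S A Z init trans n).
Proof.
move=> minit; elim: n => [//|n IH] /=; apply: measurable_funM.
  exact: measurableT_comp IH measurable_fst.
exact: measurableT_comp mtrans (measurable_fun_pair
  (measurableT_comp (measurable_lastx (n:=n)) measurable_fst) measurable_snd).
Qed.

Lemma measurable_dens_from n : measurable_fun setT
  (fun xtau : stepT * trajT n => @dens _ _ _ _ S A Z (trans xtau.1) trans n xtau.2).
Proof.
elim: n => [//|n IH] /=; apply: measurable_funM.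
  exact: measurableT_comp IH (measurable_fun_pair measurable_fst
    (measurableT_comp measurable_fst measurable_snd)).
exact: measurableT_comp mtrans (measurable_fun_pair
  (measurableT_comp (measurable_lastx (n:=n))
    (measurableT_comp measurable_fst measurable_snd))
  (measurableT_comp measurable_snd measurable_snd)).
Qed.

End trajectory_measurability.

Section evidence_lower_bound.
Context {R : realType} {dS dA dZ : measure_display}
  (S : measurableType dS) (A : measurableType dA) (Z : measurableType dZ)
  (muS : {sigma_finite_measure set S -> \bar R})
  (muA : {sigma_finite_measure set A -> \bar R})
  (muZ : {sigma_finite_measure set Z -> \bar R})
  (p0 : S -> R) (p : S -> A -> S -> R) (e : S -> Z -> R) (pi : Z -> A -> R)
  (r : S -> A -> R) (gamma : R) (K : nat).
Hypotheses (p0_ge0 : forall s, 0 <= p0 s) (mp0 : measurable_fun setT p0).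
Hypotheses (p_ge0 : forall s a s', 0 <= p s a s')
  (mp : measurable_fun setT (fun x : S * A * S => p x.1.1 x.1.2 x.2)).
Hypotheses (e_ge0 : forall s z, 0 <= e s z)
  (me : measurable_fun setT (fun x : S * Z => e x.1 x.2)).
Hypotheses (pi_ge0 : forall z a, 0 <= pi z a)
  (mpi : measurable_fun setT (fun x : Z * A => pi x.1 x.2)).
Hypotheses (r_ge0 : forall s a, 0 <= r s a)
  (mr : measurable_fun setT (fun x : S * A => r x.1 x.2)).
Hypothesis gamma01 : 0 < gamma < 1.

Local Notation stepT := (stepT S A Z).
Local Notation trajT := (trajT S A Z).
Local Notation tint := (tint muS muA muZ).
Local Notation sint := (sint muS muA muZ).
Local Notation traj_measure := (traj_measure muS muA muZ).
Local Notation polDens := (polDens e pi).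
Local Notation transDens := (transDens p e pi).
Local Notation pphi := (pphi p0 p e pi).
Local Notation rlast := (@rlast _ _ _ _ S A Z r).
Local Notation condRew := (condRew muS muA muZ p e pi r).
Local Notation Qfun := (Qfun muS muA muZ p e pi r gamma).
Local Notation PK := (PK gamma K).
Local Notation Psi := (Psi muS muA muZ p e pi r gamma K).
Local Notation ZH := (ZH muS muA muZ p0 p e pi r gamma K).
Local Notation Jobj := (Jobj muS muA muZ p0 p e pi r gamma).
Local Notation Bbound := (Bbound muS muA muZ p0 p e pi r gamma K).

Lemma polDens_ge0 x : 0 <= polDens x.
Proof. exact: mulr_ge0. Qed.

Lemma transDens_ge0 x y : 0 <= transDens x y.
Proof. by rewrite mulr_ge0 // polDens_ge0. Qed.

Lemma pphi_ge0 n (tau : trajT n) : 0 <= pphi tau.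
Proof.
apply: dens_ge0 => [x|]; last exact: transDens_ge0.
by rewrite mulr_ge0 // polDens_ge0.
Qed.

Lemma rlast_ge0 n (tau : trajT n) : 0 <= rlast tau.
Proof. exact: r_ge0. Qed.

Lemma measurable_polDens : measurable_fun setT polDens.
Proof.
apply: measurable_funM.
  exact: measurableT_comp me (measurable_fun_pair measurable_st measurable_zt).
exact: measurableT_comp mpi (measurable_fun_pair measurable_zt measurable_ac).
Qed.

Lemma measurable_transDens :
  measurable_fun setT (fun xy : stepT * stepT => transDens xy.1 xy.2).
Proof.
apply: measurable_funM; last exact: measurableT_comp measurable_polDens measurable_snd.
exact: measurableT_comp mp (measurable_fun_pair (measurable_fun_pair
  (measurableT_comp measurable_st measurable_fst)
  (measurableT_comp measurable_ac measurable_fst))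
  (measurableT_comp measurable_st measurable_snd)).
Qed.

Lemma measurable_pphi n : measurable_fun setT (pphi (H := n)).
Proof.
apply: measurable_dens; first exact: measurable_transDens.
apply: measurable_funM; last exact: measurable_polDens.
exact: measurableT_comp mp0 measurable_st.
Qed.

Lemma measurable_rlast n : measurable_fun setT (rlast (n := n)).
Proof.
exact: measurableT_comp mr (measurable_fun_pair
  (measurableT_comp measurable_st (measurable_lastx (n:=n)))
  (measurableT_comp measurable_ac (measurable_lastx (n:=n)))).
Qed.

Definition cond_reward_dens n (x : stepT) (tau : trajT n) : \bar R :=
  (dens (transDens x) transDens tau * rlast tau)%:E.

Lemma cond_reward_dens_ge0 n x (tau : trajT n) : (0 <= cond_reward_dens x tau)%E.
Proof.
by rewrite lee_fin mulr_ge0 ?rlast_ge0 // dens_ge0 // => *; exact: transDens_ge0.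
Qed.

Lemma measurable_cond_reward_dens n :
  measurable_fun setT (fun xtau : stepT * trajT n => cond_reward_dens xtau.1 xtau.2).
Proof.
apply/measurable_EFinP; apply: measurable_funM.
  exact: (measurable_dens_from measurable_transDens (n:=n)).
exact: measurableT_comp (@measurable_rlast n) measurable_snd.
Qed.

Lemma condRew_integral t x :
  condRew (st x) (ac x) t.+1 = (\int[traj_measure t]_tau cond_reward_dens x tau)%E.
Proof.
apply: tint_integral; last by move=> tau; exact: cond_reward_dens_ge0.
exact: measurable_fun_pair2 (@measurable_cond_reward_dens t).
Qed.

Lemma condRew_ge0 s a t : (0 <= condRew s a t)%E.
Proof.
case: t => [|t] /=; first by rewrite lee_fin r_ge0.
apply: tint_ge0 => tau; rewrite lee_fin mulr_ge0 ?rlast_ge0 // dens_ge0 // => *.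
  by rewrite mulr_ge0 // polDens_ge0.
exact: transDens_ge0.
Qed.

Lemma measurable_condRew t :
  measurable_fun setT (fun x : stepT => condRew (st x) (ac x) t).
Proof.
case: t => [|t].
  apply/measurable_EFinP.
  exact: measurableT_comp mr (measurable_fun_pair measurable_st measurable_ac).
have -> : (fun x : stepT => condRew (st x) (ac x) t.+1) =
    (fun x => \int[traj_measure t]_tau cond_reward_dens x tau)%E.
  by apply: funext => x; exact: condRew_integral.
exact: measurable_fun_fubini_tonelli_F (@measurable_cond_reward_dens t)
  (fun xtau => cond_reward_dens_ge0 xtau.1 xtau.2).
Qed.

Lemma disc_coef_ge0 t : 0 <= (1 - gamma) * gamma ^+ t.
Proof.
by case/andP: gamma01 => g0 g1; rewrite mulr_ge0 ?subr_ge0 ?exprn_ge0 // ltW.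
Qed.

Lemma Qfun_ge0 s a : (0 <= Qfun s a)%E.
Proof.
apply: nneseries_ge0 => t _ _.
by rewrite mule_ge0 ?condRew_ge0 // lee_fin disc_coef_ge0.
Qed.

Lemma measurable_Qfun : measurable_fun setT (fun x : stepT => Qfun (st x) (ac x)).
Proof.
apply: ge0_emeasurable_sum => [t x _ _|t _].
  by rewrite mule_ge0 ?condRew_ge0 // lee_fin disc_coef_ge0.
by apply: measurable_funeM; exact: measurable_condRew.
Qed.

Lemma Psi_ge0 H (tau : trajT H) : (0 <= Psi tau)%E.
Proof.
rewrite /Psi; case: ifP => _; first by rewrite lee_fin r_ge0.
by case: ifP => _ //; exact: Qfun_ge0.
Qed.

Lemma measurable_Psi H : measurable_fun setT (Psi (H := H)).
Proof.
rewrite /Psi; case: ltnP => [_|_]; first exact/measurable_EFinP/measurable_rlast.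
case: eqP => [->|_]; last exact: measurable_cst.
exact: measurableT_comp measurable_Qfun (measurable_lastx (n:=K)).
Qed.

Lemma pphi_Psi_ge0 H (tau : trajT H) : (0 <= (pphi tau)%:E * Psi tau)%E.
Proof. by rewrite mule_ge0 ?Psi_ge0 // lee_fin pphi_ge0. Qed.

Lemma measurable_pphi_Psi H :
  measurable_fun setT (fun tau : trajT H => (pphi tau)%:E * Psi tau)%E.
Proof.
by apply: emeasurable_funM; [exact/measurable_EFinP/measurable_pphi | exact: measurable_Psi].
Qed.

Lemma ZH_integral H : ZH H = (\int[traj_measure H]_tau ((pphi tau)%:E * Psi tau))%E.
Proof. exact: tint_integral (@measurable_pphi_Psi H) (@pphi_Psi_ge0 H). Qed.

Lemma ZH_ge0 H : (0 <= ZH H)%E.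
Proof. exact: tint_ge0 (@pphi_Psi_ge0 H). Qed.

Definition mean_reward t := tint (fun tau : trajT t => (pphi tau * rlast tau)%:E).

Definition disc_reward t := (((1 - gamma) * gamma ^+ t)%:E * mean_reward t)%E.

Lemma mean_reward_ge0 t : (0 <= mean_reward t)%E.
Proof. by apply: tint_ge0 => tau; rewrite lee_fin mulr_ge0 ?pphi_ge0 ?rlast_ge0. Qed.

Lemma disc_reward_ge0 t : (0 <= disc_reward t)%E.
Proof. by rewrite mule_ge0 ?mean_reward_ge0 // lee_fin disc_coef_ge0. Qed.

Lemma Jobj_split : Jobj =
  (\sum_(0 <= H < K) disc_reward H + \sum_(0 <= t <oo) disc_reward (t + K))%E.
Proof.
rewrite /Jobj (nneseries_split 0 K) => [|t _]; last exact: disc_reward_ge0.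
by rewrite add0n nneseries_addn // => t; exact: disc_reward_ge0.
Qed.

Lemma PK_ZH_ltK H : (H < K)%N -> ((PK H)%:E * ZH H = disc_reward H)%E.
Proof.
move=> ltHK; rewrite /PK ltHK; congr (_ * _)%E.
by congr Defs.tint; apply: funext => tau; rewrite /Psi ltHK EFinM.
Qed.

Definition prefix_reward n t (tau : trajT n) :=
  ((pphi tau)%:E * condRew (st (lastx tau)) (ac (lastx tau)) t)%E.

Lemma prefix_reward_ge0 n t (tau : trajT n) : (0 <= prefix_reward t tau)%E.
Proof. by rewrite mule_ge0 ?condRew_ge0 // lee_fin pphi_ge0. Qed.

Lemma measurable_prefix_reward n t : measurable_fun setT (@prefix_reward n t).
Proof.
apply: emeasurable_funM; first exact/measurable_EFinP/measurable_pphi.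
exact: measurableT_comp (measurable_condRew t) (measurable_lastx (n:=n)).
Qed.

(* Markov property: the path density factors at the end of the prefix. *)
Lemma tint_prefix_reward n t : tint (@prefix_reward n t) = mean_reward (t + n).
Proof.
case: t => [|t].
  by congr Defs.tint; apply: funext => tau; rewrite /prefix_reward /= EFinM.
rewrite addSnnS /mean_reward (tint_tcat muS muA muZ (n:=n) (m:=t)).
congr Defs.tint; apply: funext => tau.
have -> : (fun sig : trajT t => (pphi (tcat tau sig) * rlast (tcat tau sig))%:E) =
    (fun sig => (pphi tau)%:E * cond_reward_dens (lastx tau) sig)%E.
  apply: funext => sig.
  by rewrite /pphi dens_tcat /rlast lastx_tcat -EFinM mulrA.
have mcrd := measurable_fun_pair2 (lastx tau) (@measurable_cond_reward_dens t).
rewrite tint_integral; last 2 first.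
- exact: measurable_funeM.
- by move=> sig; rewrite mule_ge0 ?cond_reward_dens_ge0 // lee_fin pphi_ge0.
rewrite ge0_integralZl_EFin ?pphi_ge0 // => [|sig _]; last exact: cond_reward_dens_ge0.
by rewrite /prefix_reward condRew_integral.
Qed.

Lemma ZH_K_series :
  ZH K = (\sum_(0 <= t <oo) ((1 - gamma) * gamma ^+ t)%:E * mean_reward (t + K))%E.
Proof.
rewrite ZH_integral.
have -> : (fun tau : trajT K => (pphi tau)%:E * Psi tau)%E =
    (fun tau => \sum_(0 <= t <oo) ((1 - gamma) * gamma ^+ t)%:E * prefix_reward t tau)%E.
  apply: funext => tau; rewrite /Psi ltnn eqxx /Qfun -nneseriesZl => [|t _]; last first.
    by rewrite mule_ge0 ?condRew_ge0 // lee_fin disc_coef_ge0.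
  by apply: eq_eseriesr => t _; exact: muleCA.
rewrite integral_nneseries // => [|t|t tau _].
- apply: eq_eseriesr => t _; have mpr := @measurable_prefix_reward K t.
  rewrite ge0_integralZl_EFin ?disc_coef_ge0 // => [|tau _]; last first.
    exact: prefix_reward_ge0.
  by rewrite -tint_integral ?tint_prefix_reward // => tau; exact: prefix_reward_ge0.
- exact/measurable_funeM/measurable_prefix_reward.
- by rewrite mule_ge0 ?prefix_reward_ge0 // lee_fin disc_coef_ge0.
Qed.

Lemma PK_ZH_K : ((PK K)%:E * ZH K = \sum_(0 <= t <oo) disc_reward (t + K))%E.
Proof.
rewrite /PK ltnn eqxx ZH_K_series -nneseriesZl => [|t _]; last first.
  by rewrite mule_ge0 ?mean_reward_ge0 // lee_fin disc_coef_ge0.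
apply: eq_eseriesr => t _; rewrite /disc_reward muleA -EFinM.
by rewrite exprD mulrCA [gamma ^+ t * _]mulrC.
Qed.

Lemma PK_ge0 H : 0 <= PK H.
Proof.
rewrite /PK; case: ifP => _; first exact: disc_coef_ge0.
by case/andP: gamma01 => g0 _; case: ifP => _ //; rewrite exprn_ge0 // ltW.
Qed.

Lemma PK_gt0 H : (H <= K)%N -> 0 < PK H.
Proof.
case/andP: gamma01 => g0 g1; rewrite leq_eqVlt /PK => /orP[/eqP->|->].
  by rewrite ltnn eqxx exprn_gt0.
by rewrite mulr_gt0 ?subr_gt0 ?exprn_gt0.
Qed.

Hypothesis ZH_gt0_lty : forall H, (H <= K)%N -> (0 < ZH H < +oo)%E.

Lemma ZH_fin_num H : (H <= K)%N -> ZH H \is a fin_num.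
Proof. by move=> /ZH_gt0_lty /andP[Z_gt0 Z_lty]; rewrite ge0_fin_numE // ltW. Qed.

Lemma fine_ZH_gt0 H : (H <= K)%N -> 0 < fine (ZH H).
Proof. by move=> /ZH_gt0_lty; exact: fine_gt0. Qed.

Definition Jsum := \sum_(0 <= H < K.+1) PK H * fine (ZH H).

Lemma Jsum_gt0 : 0 < Jsum.
Proof.
rewrite /Jsum big_nat_recr //=; apply: ltr_pwDr.
  by rewrite mulr_gt0 ?PK_gt0 ?fine_ZH_gt0.
by apply: sumr_ge0 => H _; rewrite mulr_ge0 ?PK_ge0 // fine_ge0 // ZH_ge0.
Qed.

Lemma Jobj_Jsum : Jobj = Jsum%:E.
Proof.
rewrite Jobj_split /Jsum big_nat_recr //= EFinD -sumEFin -PK_ZH_K.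
rewrite EFinM fineK ?ZH_fin_num //; congr (_ + _)%E.
apply: eq_big_nat => H /andP[_ ltHK].
by rewrite EFinM fineK ?ZH_fin_num ?PK_ZH_ltK // ltnW.
Qed.

Lemma elog_Jobj : elog Jobj = (ln Jsum)%:E.
Proof. by rewrite Jobj_Jsum /= Jsum_gt0. Qed.

Lemma Bbound_integrandE H (k : R) (tau : trajT H) :
  ((PK H * pphi tau / k)%:E * Psi tau =
   (PK H / k)%:E * ((pphi tau)%:E * Psi tau))%E.
Proof. by rewrite muleA -EFinM mulrAC. Qed.

Lemma integrable_pphi_Psi H : (H <= K)%N ->
  (traj_measure H).-integrable setT (fun tau => (pphi tau)%:E * Psi tau)%E.
Proof.
move=> /ZH_gt0_lty /andP[_ Z_lty].
apply: ge0_integrableT; [exact: measurable_pphi_Psi | exact: pphi_Psi_ge0 |].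
by rewrite -ZH_integral.
Qed.

Lemma Bbound_term_le H (g : R) (q : trajT H -> R) : (H <= K)%N -> 0 < g ->
  (forall tau, 0 <= q tau) -> measurable_fun setT q ->
  tint (fun tau => (q tau)%:E) = 1%E ->
  ((g%:E * sint (fun tau => qlog (q tau) ((PK H * pphi tau / g)%:E * Psi tau)))
   <= (g * (ln Jsum - 1) + PK H * fine (ZH H) / Jsum)%:E)%E.
Proof.
move=> leHK g_gt0 q_ge0 mq q1.
pose c := fun tau : trajT H => ((PK H * pphi tau / g)%:E * Psi tau)%E.
have cE : c = (fun tau => (PK H / g)%:E * ((pphi tau)%:E * Psi tau))%E.
  by apply: funext => tau; exact: Bbound_integrandE.
have c_ge0 tau : (0 <= c tau)%E.
  by rewrite cE mule_ge0 ?pphi_Psi_ge0 // lee_fin divr_ge0 ?PK_ge0 ?ltW.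
have c_int : (traj_measure H).-integrable setT c.
  by rewrite cE; exact: integrableZl (integrable_pphi_Psi leHK).
have c_integral : (\int[traj_measure H]_tau c tau = (PK H / g)%:E * ZH H)%E.
  by rewrite cE integralZl ?integrable_pphi_Psi // -ZH_integral.
have mqE : measurable_fun setT (fun tau => (q tau)%:E) by exact/measurable_EFinP.
have qE_ge0 tau : (0 <= (q tau)%:E)%E by rewrite lee_fin.
have q_integral : (\int[traj_measure H]_tau (q tau)%:E = 1)%E.
  by rewrite -tint_integral.
have q_int : (traj_measure H).-integrable setT (fun tau => (q tau)%:E).
  by apply: ge0_integrableT; rewrite // q_integral ltry.
pose v := fun tau : trajT H => ((ln Jsum - 1)%:E * (q tau)%:E + (Jsum^-1)%:E * c tau)%E.
have le_qlog_v tau : (qlog (q tau) (c tau) <= v tau)%E.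
  rewrite /v -EFinM (mulrC (ln Jsum - 1)).
  exact: qlog_le_tangent Jsum_gt0 (q_ge0 tau) (c_ge0 tau).
have mv : measurable_fun setT v.
  by apply: emeasurable_funD; apply: measurable_funeM => //; case/integrableP: c_int.
have sint_v : sint v = ((ln Jsum - 1)%:E + (Jsum^-1)%:E * ((PK H / g)%:E * ZH H))%E.
  rewrite sint_integral // /v integralD ?integrableZl // !integralZl //.
  by rewrite q_integral c_integral mule1.
have -> : ((g * (ln Jsum - 1) + PK H * fine (ZH H) / Jsum)%:E =
    g%:E * ((ln Jsum - 1)%:E + (Jsum^-1)%:E * ((PK H / g)%:E * ZH H)))%E.
  rewrite -[ZH H in RHS](fineK (ZH_fin_num leHK)) -!EFinM; congr EFin.
  by field; rewrite !gt_eqF ?Jsum_gt0.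
apply: lee_wpmul2l; first by rewrite lee_fin ltW.
by rewrite -sint_v; apply: le_sint => tau; exact: le_qlog_v.
Qed.

Lemma Bbound_le (g : nat -> R) (q : forall H, trajT H -> R) :
  is_prob K g -> is_traj_density muS muA muZ K q -> (Bbound g q <= elog Jobj)%E.
Proof.
case=> g_ge0 g_sum1 q_dens; rewrite elog_Jobj.
apply: (@le_trans _ _ (\sum_(0 <= H < K.+1)
    (g H * (ln Jsum - 1) + PK H * fine (ZH H) / Jsum)%:E)%E).
  rewrite /Bbound big_nat_cond [in X in (_ <= X)%E]big_nat_cond.
  apply: lee_sum => H /andP[/andP[_ leHK] _]; case: eqP => [->|/eqP g_neq0].
    by rewrite mul0r add0r lee_fin divr_ge0 ?mulr_ge0 ?PK_ge0 ?fine_ge0 ?ZH_ge0 ?ltW ?Jsum_gt0.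
  have [q_ge0 mq q1] := q_dens H leHK.
  by apply: Bbound_term_le; rewrite // lt_def g_neq0 g_ge0.
rewrite sumEFin lee_fin big_split /= -!mulr_suml g_sum1 mul1r -/Jsum.
by rewrite mulfV ?gt_eqF ?Jsum_gt0 // subrK.
Qed.

Local Notation gstar := (gstar muS muA muZ p0 p e pi r gamma K).
Local Notation qstar := (qstar muS muA muZ p0 p e pi r gamma K).

Lemma gstar_gt0 H : (H <= K)%N -> 0 < gstar H.
Proof. by move=> leHK; rewrite divr_gt0 ?mulr_gt0 ?PK_gt0 ?fine_ZH_gt0 ?Jsum_gt0. Qed.

Lemma measurable_qstar H : measurable_fun setT (qstar (H := H)).
Proof.
apply: measurable_funM => //.
exact: measurableT_comp (fine_measurable measurableT) (@measurable_pphi_Psi H).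
Qed.

Lemma qstar_ge0 H (tau : trajT H) : 0 <= qstar tau.
Proof. by rewrite divr_ge0 // fine_ge0 // ?ZH_ge0 // pphi_Psi_ge0. Qed.

Lemma integral_qstar H : (H <= K)%N ->
  (\int[traj_measure H]_tau (qstar tau)%:E = 1)%E.
Proof.
move=> leHK; have Z_gt0 := fine_ZH_gt0 leHK.
under eq_integral => tau _ do
  rewrite /qstar mulrC EFinM.
rewrite ge0_integralZl_EFin ?invr_ge0 ?ltW //; last 2 first.
- by move=> tau _; rewrite lee_fin fine_ge0 // pphi_Psi_ge0.
- exact/measurable_EFinP/(measurableT_comp (fine_measurable measurableT)
    (@measurable_pphi_Psi H)).
rewrite ge0_integral_fine; first 2 [exact: measurable_pphi_Psi | exact: pphi_Psi_ge0].
  by rewrite -ZH_integral -(fineK (ZH_fin_num leHK)) -EFinM mulVf ?gt_eqF.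
by rewrite -ZH_integral; case/andP: (ZH_gt0_lty leHK).
Qed.

(* For q* and g* the ratio inside the logarithm is the constant Jsum. *)
Lemma Bbound_term_gstar H : (H <= K)%N ->
  sint (fun tau : trajT H =>
    qlog (qstar tau) ((PK H * pphi tau / gstar H)%:E * Psi tau)) = (ln Jsum)%:E.
Proof.
move=> leHK; have Z_gt0 := fine_ZH_gt0 leHK.
have k_gt0 : 0 < PK H / gstar H by rewrite divr_gt0 ?PK_gt0 ?gstar_gt0.
have kZ : PK H / gstar H * fine (ZH H) = Jsum.
  by rewrite /gstar -/Jsum; field; rewrite !gt_eqF ?PK_gt0 ?Jsum_gt0.
have mqstar := @measurable_qstar H.
under eq_fun => tau do
  rewrite Bbound_integrandE /qstar qlog_scaled ?pphi_Psi_ge0 // kZ.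
rewrite sint_integral; last exact/measurable_funeM/measurable_EFinP.
rewrite integralZl ?integral_qstar ?mule1 //.
by apply: ge0_integrableT => [|tau|]; rewrite ?lee_fin ?qstar_ge0 ?integral_qstar ?ltry //;
  exact/measurable_EFinP.
Qed.

Lemma Bbound_gstar : Bbound gstar qstar = elog Jobj.
Proof.
rewrite elog_Jobj /Bbound.
rewrite (eq_big_nat _ _ (F2 := fun H => (gstar H * ln Jsum)%:E)) => [|H /andP[_ ltHK]].
  rewrite sumEFin -mulr_suml -[X in X * _]mulr_suml -/Jsum.
  by rewrite mulfV ?gt_eqF ?Jsum_gt0 // mul1r.
by rewrite gt_eqF ?gstar_gt0 // Bbound_term_gstar // EFinM.
Qed.

End evidence_lower_bound.

Theorem mainTheorem5 (R : realType) (dS dA dZ : measure_display)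
  (S : measurableType dS) (A : measurableType dA) (Z : measurableType dZ)
  (muS : {sigma_finite_measure set S -> \bar R})
  (muA : {sigma_finite_measure set A -> \bar R})
  (muZ : {sigma_finite_measure set Z -> \bar R})
  (p0 : S -> R) (p : S -> A -> S -> R) (e : S -> Z -> R) (pi : Z -> A -> R)
  (r : S -> A -> R) (gamma : R) (K : nat) :
  0 < gamma < 1 ->
  (* p0 is a probability density on S *)
  (forall s, 0 <= p0 s) -> measurable_fun setT p0 ->
  (\int[muS]_s (p0 s)%:E = 1)%E ->
  (* p(. | s, a) is a transition density *)
  (forall s a s', 0 <= p s a s') ->
  measurable_fun setT (fun x : S * A * S => p x.1.1 x.1.2 x.2) ->
  (forall s a, \int[muS]_s' (p s a s')%:E = 1)%E ->
  (* encoder e(. | s) *)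
  (forall s z, 0 <= e s z) ->
  measurable_fun setT (fun x : S * Z => e x.1 x.2) ->
  (forall s, \int[muZ]_z (e s z)%:E = 1)%E ->
  (* latent policy pi(. | z) *)
  (forall z a, 0 <= pi z a) ->
  measurable_fun setT (fun x : Z * A => pi x.1 x.2) ->
  (forall z, \int[muA]_a (pi z a)%:E = 1)%E ->
  (* nonnegative measurable reward *)
  (forall s a, 0 <= r s a) ->
  measurable_fun setT (fun x : S * A => r x.1 x.2) ->
  (* Z_H finite and positive *)
  (forall H, (H <= K)%N ->
     (0 < ZH muS muA muZ p0 p e pi r gamma K H < +oo)%E) ->
  (forall (g : nat -> R) (q : forall H, trajT S A Z H -> R),
     is_prob K g -> is_traj_density muS muA muZ K q ->
     (Bbound muS muA muZ p0 p e pi r gamma K g q <=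
        elog (Jobj muS muA muZ p0 p e pi r gamma))%E) /\
  Bbound muS muA muZ p0 p e pi r gamma K
    (gstar muS muA muZ p0 p e pi r gamma K)
    (qstar muS muA muZ p0 p e pi r gamma K) =
  elog (Jobj muS muA muZ p0 p e pi r gamma).
Proof.
move=> g01 p0_ge0 mp0 _ p_ge0 mp _ e_ge0 me _ pi_ge0 mpi _ r_ge0 mr ZH_gt0_lty.
by split=> [g q|]; [apply: Bbound_le | apply: Bbound_gstar].
Qed.
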